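(* Let ${\bf x}_0\in\mathbb{R}^m$ be a constant (leader state) and consider $n$ followers with states ${\bf x}_i(t)\in\mathbb{R}^m$ and dynamics $$\dot{\bf x}_i(t)=\sum_{j\in\mathcal{N}_i}{\bf K}_{ji}\big({\bf x}_j(t-T_{ji})-{\bf x}_i(t)\big)+\gamma_i{\bf K}_{0i}\big({\bf x}_0-{\bf x}_i(t)\big),\qquad i=1,\dots,n,$$ where $\mathcal{N}_i\subseteq\{1,\dots,n\}\setminus\{i\}$ are fixed neighbor sets among followers, each ${\bf K}_{ji}$ is constant symmetric positive definite, $T_{ji}\ge0$ are constant (possibly different) delays, $\gamma_i\in\{0,1\}$, and ${\bf K}_{0i}$ is a constant symmetric positive definite matrix whenever $\gamma_i=1$. Assume the whole network including the leader (node $0$ with edges $0\to i$ for $\gamma_i=1$) is connected, with $\gamma_i=1$ for at least one $i$, and that the links among followers are either bidirectional with ${\bf K}_{ji}={\bf K}_{ij}$, or unidirectional but formed into closed rings with identical gains within each ring. Then, regardless of the values of the delays and of the initial conditions, ${\bf x}_i(t)\to{\bf x}_0$ as $t\to\infty$ for all $i=1,\dots,n$. *)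

From HB Require Import structures.
From mathcomp Require Import all_boot all_order all_algebra.
From mathcomp Require Import all_classical all_reals all_analysis.
Set Implicit Arguments. Unset Strict Implicit. Unset Printing Implicit Defensive.
Import Order.TTheory GRing.Theory Num.Theory.
Import numFieldNormedType.Exports.
Local Open Scope ring_scope.

Definition spd (R : realType) (m : nat) (A : 'M[R]_m) : Prop :=
  A^T = A /\ forall v : 'cV[R]_m, v != 0 -> 0 < (v^T *m A *m v) ord0 ord0.

(* (j, i) is an edge of the closed directed ring c = [v_0; ...; v_(k-1)],
   i.e. j = v_l and i = v_((l+1) mod k) for some l < k. *)
Definition ring_edge (n : nat) (c : seq 'I_n) (j i : 'I_n) : bool :=
  has (fun l => (nth j c l == j) && (nth j c ((l.+1) %% size c) == i))
      (iota 0 (size c)).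

(* Undirected adjacency of the whole network: node None is the leader 0,
   node Some i is follower i.  Followers are adjacent when j \in N i or
   i \in N j; the leader is adjacent to i when gamma i. *)
Definition net_adj (n : nat) (N : 'I_n -> {set 'I_n}) (gamma : 'I_n -> bool)
  : rel (option 'I_n) :=
  fun u v => match u, v with
  | None, None => false
  | None, Some i => gamma i
  | Some i, None => gamma i
  | Some a, Some b => (a \in N b) || (b \in N a)
  end.

Definition net_connected (n : nat) (N : 'I_n -> {set 'I_n})
  (gamma : 'I_n -> bool) : Prop :=
  forall u v : option 'I_n, connect (net_adj N gamma) u v.

(* Link structure among followers: the edge set {(j,i) | j \in N i} splits
   into bidirectional links (a symmetric subset "bidir" with K j i = K i j)
   and unidirectional links that are partitioned into closed simple directed
   rings, each ring having identical gains on all its edges. *)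
Definition links_ok (R : realType) (m n : nat) (N : 'I_n -> {set 'I_n})
  (K : 'I_n -> 'I_n -> 'M[R]_m) : Prop :=
  exists (bidir : 'I_n -> 'I_n -> bool) (rings : seq (seq 'I_n)),
    [/\ (forall i j, bidir j i -> (j \in N i) /\ bidir i j /\ K j i = K i j),
        (forall c, c \in rings -> uniq c /\
           forall j i, ring_edge c j i -> (j \in N i) /\ ~~ bidir j i),
        (forall c, c \in rings -> forall j i k l,
           ring_edge c j i -> ring_edge c k l -> K j i = K k l) &
        (forall i j, j \in N i -> ~~ bidir j i ->
           count (fun c => ring_edge c j i) rings = 1%N)].

From HB Require Import structures.
From mathcomp Require Import all_boot all_order all_algebra.
From mathcomp Require Import all_classical all_reals all_analysis.
From mathcomp Require Import ring lra.
Import Order.TTheory GRing.Theory Num.Theory.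
Import numFieldNormedType.Exports.
Local Open Scope ring_scope.
Local Open Scope classical_set_scope.
Set Implicit Arguments. Unset Strict Implicit. Unset Printing Implicit Defensive.

(* With e_i = x_i - x_0, the Lyapunov-Krasovskii functional
     V(t) = 1/2 sum_i |e_i(t)|^2
          + 1/2 sum_i sum_(j in N_i) int_(t - T_ji)^t e_j(s)^T K_ji e_j(s) ds
   is nonnegative and has derivative -D(t), where D sums the link mismatches
   (e_i(t) - e_j(t - T_ji))^T K_ji (e_i(t) - e_j(t - T_ji)) and the leader
   terms e_i^T K_0i e_i.  Completing the square in each link leaves a
   telescoping sum of e^T K e terms, which cancels because at every follower
   the gains of the incoming links add up to those of the outgoing ones: this
   is what bidirectional links with K_ji = K_ij and rings with equal gains
   provide.  Hence V decreases, the errors are bounded, so is D', and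
   Barbalat's lemma gives D -> 0.  So every link mismatch and the error of
   every neighbour of the leader tend to 0, and connectivity propagates the
   convergence from the leader to all followers. *)

Lemma nth_rot1 (T : Type) (x0 : T) (c : seq T) l : (l < size c)%N ->
  nth x0 (rot 1 c) l = nth x0 c (l.+1 %% size c).
Proof.
case: c => [|a c] //= hl.
rewrite rot1_cons nth_rcons; move: hl; rewrite ltnS leq_eqVlt => /orP[/eqP ->|hl].
  by rewrite ltnn eqxx modnn.
by rewrite hl modn_small ?ltnS.
Qed.

Lemma has_nth_pairE (T : eqType) (x0 : T) (s t : seq T) v y :
  uniq s -> size s = size t ->
  has (fun l => (nth x0 s l == v) && (nth x0 t l == y)) (iota 0 (size s)) =
  (v \in s) && (y == nth x0 t (index v s)).
Proof.
move=> us st; apply/hasP/andP.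
- case=> l; rewrite mem_iota add0n => /andP[_ hl] /andP[/eqP hv /eqP hy].
  have vs : v \in s by rewrite -hv mem_nth.
  by split => //; rewrite -hv index_uniq // hy.
- case=> vs /eqP ->; exists (index v s).
    by rewrite mem_iota add0n index_mem vs.
  by rewrite nth_index // !eqxx.
Qed.

Section RingEdges.
Variables (n : nat) (c : seq 'I_n).

Lemma ring_edgeE (j i x0 : 'I_n) : ring_edge c j i =
  has (fun l => (nth x0 c l == j) && (nth x0 (rot 1 c) l == i)) (iota 0 (size c)).
Proof.
apply: eq_in_has => l; rewrite mem_iota add0n => /andP[_ hl].
rewrite nth_rot1 // (set_nth_default x0 j hl).
case: c hl => [|a c'] //= hl.
by rewrite (set_nth_default x0 j) // ltn_mod.
Qed.

Hypothesis uc : uniq c.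

Lemma ring_edge_out (v i x0 : 'I_n) :
  ring_edge c v i = (v \in c) && (i == nth x0 (rot 1 c) (index v c)).
Proof. by rewrite (ring_edgeE _ _ x0) has_nth_pairE // size_rot. Qed.

Lemma ring_edge_in (j v x0 : 'I_n) :
  ring_edge c j v = (v \in c) && (j == nth x0 c (index v (rot 1 c))).
Proof.
rewrite (ring_edgeE _ _ x0) -(size_rot 1) -(mem_rot 1).
rewrite -(has_nth_pairE x0) ?rot_uniq ?size_rot //.
by apply: eq_has => l /=; rewrite andbC.
Qed.

Lemma ring_gains_balanced (M : nmodType) (G : 'I_n -> 'I_n -> M) v :
  (forall j i k l, ring_edge c j i -> ring_edge c k l -> G j i = G k l) ->
  \sum_(i | ring_edge c v i) G v i = \sum_(j | ring_edge c j v) G j v.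
Proof.
move=> hG; under eq_bigl do rewrite (ring_edge_out _ _ v).
under [RHS]eq_bigl do rewrite (ring_edge_in _ _ v).
case vc: (v \in c) => /=; last by rewrite !big_pred0.
rewrite !big_pred1_eq; apply: hG.
  by rewrite (ring_edge_out _ _ v) vc eqxx.
by rewrite (ring_edge_in _ _ v) vc eqxx.
Qed.

End RingEdges.

Lemma big_count1_partition (I : finType) (M : nmodType) (B : eqType) (bs : seq B)
    (P : pred I) (E : B -> pred I) (f : I -> M) :
  (forall i, P i -> count (E^~ i) bs = 1%N) ->
  (forall b, b \in bs -> forall i, E b i -> P i) ->
  \sum_(i | P i) f i = \sum_(b <- bs) \sum_(i | E b i) f i.
Proof.
move=> hc hE.
transitivity (\sum_(i | P i) \sum_(b <- bs | E b i) f i).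
  by apply: eq_bigr => i Pi; rewrite big_const_seq hc //= addr0.
rewrite (exchange_big_dep predT) //= big_seq [RHS]big_seq.
apply: eq_bigr => b bb; apply: eq_bigl => i.
by apply/andb_idl => /(hE b bb).
Qed.

Lemma links_ok_balanced (R : realType) (m n : nat) (N : 'I_n -> {set 'I_n})
    (K : 'I_n -> 'I_n -> 'M[R]_m) :
  links_ok N K -> forall v, \sum_(i | v \in N i) K v i = \sum_(j in N v) K j v.
Proof.
case=> bidir [rings [hbi hring hgain hcount]] v.
rewrite (bigID (bidir v)) [RHS](bigID (bidir^~ v)) /=; congr (_ + _).
  have bidirC i : bidir v i = bidir i v by apply/idP/idP => /hbi [_ []].
  have bidir_in j i : (i \in N j) && bidir i j = bidir i j.
    by apply: andb_idl => /hbi [].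
  rewrite (eq_bigl _ _ (bidir_in^~ v)) (eq_bigl _ _ (bidir_in v)).
  by rewrite (eq_bigl _ _ bidirC); apply: eq_bigr => i /hbi [_ [_ ->]].
have inN c (cr : c \in rings) j i : ring_edge c j i -> (j \in N i) && ~~ bidir j i.
  by move=> /((hring c cr).2 j i) [-> ->].
rewrite (big_count1_partition (bs := rings) (E := fun c i => ring_edge c v i)); first last.
- by move=> c cr i /(inN c cr).
- by move=> i /andP[vi nbi]; apply: hcount.
rewrite [RHS](big_count1_partition (bs := rings) (E := fun c j => ring_edge c j v)); first last.
- by move=> c cr j /(inN c cr).
- by move=> j /andP[jv nbj]; apply: hcount.
rewrite big_seq [RHS]big_seq; apply: eq_bigr => c cr.
exact: (@ring_gains_balanced _ _ (hring c cr).1 _ K v (hgain c cr)).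
Qed.

Definition mxform (R : pzRingType) (m : nat) (K : 'M[R]_m) (u v : 'cV[R]_m) : R :=
  (u^T *m K *m v) ord0 ord0.

Section MxformAlgebra.
Variables (R : comPzRingType) (m : nat).
Implicit Types (K : 'M[R]_m) (u v w : 'cV[R]_m).

Lemma mxformE K u v : mxform K u v = \sum_b \sum_a u a ord0 * K a b * v b ord0.
Proof.
rewrite /mxform mxE; apply: eq_bigr => b _; rewrite mxE big_distrl /=.
by apply: eq_bigr => a _; rewrite mxE.
Qed.

Lemma mxform1E u v : mxform 1%:M u v = \sum_a u a ord0 * v a ord0.
Proof. by rewrite /mxform mulmx1 mxE; apply: eq_bigr => a _; rewrite mxE. Qed.

Lemma mxformC K u v : K^T = K -> mxform K u v = mxform K v u.
Proof.
move=> hK; rewrite !mxformE exchange_big; apply: eq_bigr => b _.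
by apply: eq_bigr => a _; rewrite -[in RHS]hK mxE; ring.
Qed.

Lemma mxformBl K u v w : mxform K (v - w) u = mxform K v u - mxform K w u.
Proof. by rewrite /mxform linearB /= !mulmxBl !mxE. Qed.

Lemma mxformBr K u v w : mxform K u (v - w) = mxform K u v - mxform K u w.
Proof. by rewrite /mxform mulmxBr !mxE. Qed.

Lemma mxformZl K (a : R) u v : mxform K (a *: u) v = a * mxform K u v.
Proof. by rewrite /mxform linearZ /= -!scalemxAl mxE. Qed.

Lemma mxformZr K (a : R) u v : mxform K u (a *: v) = a * mxform K u v.
Proof. by rewrite /mxform -scalemxAr mxE. Qed.

Lemma mxform_sumK (I : Type) (r : seq I) (P : pred I) (F : I -> 'M[R]_m) u v :
  mxform (\sum_(i <- r | P i) F i) u v = \sum_(i <- r | P i) mxform (F i) u v.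
Proof.
rewrite /mxform; elim/big_rec2: _ => [|i M a _ <-]; first by rewrite mulmx0 mul0mx mxE.
by rewrite mulmxDr mulmxDl !mxE.
Qed.

Lemma mxform_sumr (I : Type) (r : seq I) (P : pred I) K u (F : I -> 'cV[R]_m) :
  mxform K u (\sum_(i <- r | P i) F i) = \sum_(i <- r | P i) mxform K u (F i).
Proof. by rewrite /mxform mulmx_sumr summxE. Qed.

Lemma mxform1_mulmx K u v : mxform 1%:M u (K *m v) = mxform K u v.
Proof. by rewrite /mxform mulmx1 mulmxA. Qed.

End MxformAlgebra.

Section MxNorm.
Variable R : realType.

Lemma mx_norm_entry p q (M : 'M[R]_(p, q)) i j : `|M i j| <= `|M|.
Proof.
rewrite [leRHS]/Num.Def.normr /= mx_normrE.
by apply/bigmax_geP; right => /=; exists (i, j).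
Qed.

Lemma mx_norm_le p q (M : 'M[R]_(p, q)) c : 0 <= c ->
  (forall i j, `|M i j| <= c) -> `|M| <= c.
Proof. by move=> c0 h; rewrite [leLHS]/Num.Def.normr /= mx_normrE bigmax_le. Qed.

Lemma mx_norm_tr p q (M : 'M[R]_(p, q)) : `|M^T| = `|M|.
Proof.
apply/eqP; rewrite eq_le; apply/andP; split; apply: mx_norm_le => // i j.
  by rewrite mxE mx_norm_entry.
by rewrite -[M]trmxK mxE trmxK mx_norm_entry.
Qed.

Lemma norm_mulmx_le m (K : 'M[R]_m) (v : 'cV[R]_m) : `|K *m v| <= m%:R * `|K| * `|v|.
Proof.
apply: mx_norm_le => [|a j]; first by rewrite !mulr_ge0.
rewrite mxE (le_trans (ler_norm_sum _ _ _)) //.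
apply: le_trans (_ : _ <= \sum_(b < m) `|K| * `|v|) _.
  by apply: ler_sum => b _; rewrite normrM ler_pM ?mx_norm_entry.
by rewrite sumr_const card_ord -mulrA mulr_natl.
Qed.

Lemma norm_mxform_le m (K : 'M[R]_m) (u v : 'cV[R]_m) :
  `|mxform K u v| <= (m * m)%:R * `|K| * `|u| * `|v|.
Proof.
rewrite mxformE (le_trans (ler_norm_sum _ _ _)) //.
apply: le_trans (_ : _ <= \sum_(b < m) \sum_(a < m) `|K| * `|u| * `|v|) _.
  apply: ler_sum => b _; rewrite (le_trans (ler_norm_sum _ _ _)) //.
  apply: ler_sum => a _; rewrite !normrM [`|K| * _]mulrC.
  by rewrite ler_pM ?mulr_ge0 ?mx_norm_entry // ler_pM ?mx_norm_entry.
by rewrite !sumr_const !card_ord natrM -!mulrA !mulr_natl.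
Qed.

Lemma mxform1_ge0 m (v : 'cV[R]_m) : 0 <= mxform 1%:M v v.
Proof. by rewrite mxform1E sumr_ge0 // => a _; rewrite -expr2 sqr_ge0. Qed.

Lemma sqr_norm_le_mxform1 m (v : 'cV[R]_m) : `|v| ^+ 2 <= mxform 1%:M v v.
Proof.
have s0 := mxform1_ge0 v.
rewrite -(sqr_sqrtr s0) ler_pXn2r // ?nnegrE ?sqrtr_ge0 //.
apply: mx_norm_le; first exact: sqrtr_ge0.
move=> a j; rewrite (ord1 j) -sqrtr_sqr ler_sqrt // mxform1E (bigD1 a) //= -expr2.
by rewrite lerDl sumr_ge0 // => b _; rewrite -expr2 sqr_ge0.
Qed.

End MxNorm.

Section Calculus.
Variable R : realType.

Lemma continuous_sum (T : topologicalType) (I : Type) (r : seq I) (P : pred I)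
    (f : I -> T -> R) :
  (forall i, continuous (f i)) -> continuous (fun s => \sum_(i <- r | P i) f i s).
Proof.
move=> h; rewrite -fct_sumE; apply: (big_ind (fun g => continuous g)) => //.
- exact: cst_continuous.
- by move=> g1 g2 c1 c2 x; exact: (continuousD (c1 x) (c2 x)).
Qed.

Lemma continuous_mxform (T : topologicalType) m (K : 'M[R]_m) (u v : T -> 'cV[R]_m) :
  (forall a, continuous (fun s => u s a ord0)) ->
  (forall a, continuous (fun s => v s a ord0)) ->
  continuous (fun s => mxform K (u s) (v s)).
Proof.
move=> hu hv; under eq_fun do rewrite mxformE.
apply: continuous_sum => b; apply: continuous_sum => a s.
have hKu : {for s, continuous ((fun s => u s a ord0) \* cst (K a b))}.
  by apply: continuousM; [exact: hu | exact: cst_continuous].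
have hKuv : {for s, continuous ((fun s => u s a ord0 * K a b) \* (fun s => v s b ord0))}.
  by apply: continuousM; [exact: hKu | exact: hv].
exact: hKuv.
Qed.

Lemma continuous_coord m (u : R -> 'cV[R]_m) a :
  continuous u -> continuous (fun s => u s a ord0).
Proof. by move=> hu s; exact: (continuous_comp (hu s) (@coord_continuous R _ _ a ord0 (u s))). Qed.

Lemma is_derive_big (I : Type) (r : seq I) (P : pred I) (f : I -> R -> R) (df : I -> R) t :
  (forall i, P i -> is_derive t (1:R) (f i) (df i)) ->
  is_derive t (1:R) (fun s => \sum_(i <- r | P i) f i s) (\sum_(i <- r | P i) df i).
Proof.
move=> h; rewrite -fct_sumE.
apply: (big_ind2 (fun g dg => is_derive t 1 g dg)) => //.
- exact: is_derive_cst.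
- by move=> g1 dg1 g2 dg2 d1 d2; apply: is_deriveD.
Qed.

Lemma is_derive_coord m (u : R -> 'cV[R]_m) (t : R) du a :
  is_derive t (1:R) u du -> is_derive t (1:R) (fun s => u s a ord0) (du a ord0).
Proof.
move=> hd; have dv : derivable u t 1 by case: hd.
have := derive_mx dv; rewrite derive_val => ->; rewrite mxE.
by apply: derivableP; exact: (proj1 (derivable_mxP u t 1) dv a ord0).
Qed.

Lemma is_derive_mxform m (K : 'M[R]_m) (u v : R -> 'cV[R]_m) (t : R) du dv :
  is_derive t (1:R) u du -> is_derive t (1:R) v dv ->
  is_derive t (1:R) (fun s => mxform K (u s) (v s)) (mxform K du (v t) + mxform K (u t) dv).
Proof.
move=> hu hv; under eq_fun do rewrite mxformE.
have -> : mxform K du (v t) + mxform K (u t) dv = \sum_b \sum_a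
    ((u t a ord0 * K a b) * dv b ord0 + v t b ord0 * (u t a ord0 * 0 + K a b * du a ord0)).
  rewrite !mxformE -big_split /=; apply: eq_bigr => b _; rewrite -big_split /=.
  by apply: eq_bigr => a _; ring.
apply: is_derive_big => b _; apply: is_derive_big => a _.
have hua := is_derive_coord a hu; have hvb := is_derive_coord b hv.
have hKu : is_derive t (1:R) (fun s => u s a ord0 * K a b) (u t a ord0 * 0 + K a b * du a ord0).
  exact: is_deriveM.
exact: is_deriveM.
Qed.

Lemma is_derive_delay (V : normedModType R) (f : R -> V) (t c : R) df :
  is_derive (t - c) (1:R) f df -> is_derive t (1:R) (fun s => f (s - c)) df.
Proof.
move=> [hd hv].
have eqq : (fun h : R => h^-1 *: (((fun s => f (s - c)) \o shift t) (h *: 1) - f (t - c))) =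
  (fun h => h^-1 *: ((f \o shift (t - c)) (h *: 1) - f (t - c))).
  by apply/funext => h /=; rewrite addrA.
by apply: DeriveDef; rewrite /derivable /derive eqq.
Qed.

Lemma is_derive_integral (g : R -> R) (a s : R) : continuous g -> a < s ->
  is_derive s (1:R) (fun x => parameterized_integral lebesgue_measure a x g) (g s).
Proof.
move=> gc As; have s1 : s < s + 1 by rewrite ltrDl.
have ig : lebesgue_measure.-integrable `[a, s + 1] (EFin \o g).
  apply: continuous_compact_integrable; first exact: segment_compact.
  exact: continuous_subspaceT.
have [d e] := continuous_FTC1_closed s1 ig As (gc s).
by apply: DeriveDef; [exact: d | rewrite -derive1E e].
Qed.

Lemma MVT_closed (f df : R -> R) (a b : R) : a <= b ->
  (forall x, a <= x <= b -> is_derive x (1:R) f (df x)) ->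
  exists2 c, a <= c <= b & f b - f a = df c * (b - a).
Proof.
move=> ab h.
have fc : {within `[a, b], continuous f}.
  apply: continuous_in_subspaceT => x; rewrite inE /= in_itv /= => /h hx.
  by apply: differentiable_continuous; apply/derivable1_diffP; case: hx.
have [|c] := MVT_segment ab (df := df) _ fc.
  by move=> x; rewrite in_itv /= => /andP[ax xb]; apply: h; rewrite !ltW.
by rewrite in_itv /= => cab e; exists c.
Qed.

End Calculus.

Section Coercivity.
Variable R : realType.

Lemma compact_unit_sphere_rV n : compact [set w : 'rV[R]_n | `|w| = 1].
Proof.
apply: bounded_closed_compact.
  by exists 1; split => // M M1 w /= ->; exact: ltW.
have -> : [set w : 'rV[R]_n | `|w| = 1] = (@Num.norm _ 'rV[R]_n) @^-1` [set 1] by [].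
by apply: preimage_closed => [w _|]; [exact: norm_continuous | exact: closed_eq].
Qed.

Lemma spd_coercive m (K : 'M[R]_m) : spd K ->
  exists2 c, 0 < c & forall v, c * `|v| ^+ 2 <= mxform K v v.
Proof.
case: m K => [|m] K [hKs hKp].
  by exists 1 => // v; rewrite [v]flatmx0 normr0 expr0n /= mulr0 /mxform mulmx0 mxE.
pose S := [set w : 'rV[R]_m.+1 | `|w| = 1].
pose f w := mxform K w^T w^T.
have S0 : S !=set0.
  exists (const_mx 1); apply/eqP; rewrite eq_le; apply/andP; split.
    by apply: mx_norm_le => // i j; rewrite mxE normr1.
  by have := mx_norm_entry (const_mx 1 : 'rV[R]_m.+1) ord0 ord0; rewrite mxE normr1.
have fc : {within S, continuous f}.
  have coordT a : continuous (fun w : 'rV[R]_m.+1 => w^T a ord0).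
    by under eq_fun do rewrite mxE; exact: coord_continuous.
  by apply: continuous_subspaceT; apply: continuous_mxform.
have [c cS cmin] := EVT_min_rV S0 (@compact_unit_sphere_rV m.+1) fc.
have c1 : `|c| = 1 by move: cS; rewrite inE.
have fc0 : 0 < f c.
  apply: hKp; apply/eqP => /(congr1 trmx); rewrite trmxK trmx0 => c0.
  by move: c1; rewrite c0 normr0 => /eqP; rewrite eq_sym oner_eq0.
exists (f c) => // v; have [->|v0] := eqVneq v 0.
  by rewrite normr0 expr0n /= mulr0 /mxform mulmx0 mxE.
have nv : 0 < `|v| by rewrite normr_gt0.
have wS : (`|v|^-1 *: v)^T \in S.
  rewrite inE /S /= mx_norm_tr normrZ ger0_norm ?invr_ge0 ?ltW //.
  by rewrite mulVf // gt_eqF.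
have := cmin _ wS; rewrite /f trmxK mxformZl mxformZr => h.
have -> : mxform K v v = `|v| ^+ 2 * (`|v|^-1 * (`|v|^-1 * mxform K v v)).
  by field; rewrite gt_eqF.
by rewrite [X in _ <= X]mulrC ler_wpM2r // exprn_ge0 // ltW.
Qed.

Lemma spd_mxform_ge0 m (K : 'M[R]_m) v : spd K -> 0 <= mxform K v v.
Proof.
move=> /spd_coercive [c c0 h]; apply: le_trans (h v).
by rewrite mulr_ge0 // ?ltW // exprn_ge0.
Qed.

Lemma spd_cvg0 (T : Type) (F : set_system T) {FF : Filter F} m (K : 'M[R]_m)
    (v : T -> 'cV[R]_m) : spd K ->
  mxform K (v x) (v x) @[x --> F] --> 0 -> v x @[x --> F] --> (0 : 'cV[R]_m).
Proof.
move=> /spd_coercive [c c0 hc] /cvgr0Pnorm_lt hq.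
apply/cvgr0Pnorm_lt => eps e0.
near=> x; have h : c * `|v x| ^+ 2 < c * eps ^+ 2.
  apply: le_lt_trans (hc (v x)) (le_lt_trans (ler_norm _) _).
  by near: x; apply: hq; rewrite mulr_gt0 // exprn_gt0.
rewrite ltr_pM2l // in h.
by rewrite -(ltr_pXn2r (_ : (0 < 2)%N)) // nnegrE ?normr_ge0 ?ltW.
Unshelve. all: end_near.
Qed.

End Coercivity.

Lemma is_deriveN_nincr (R : realType) (V D : R -> R) (t0 : R) :
  (forall t, t0 < t -> is_derive t (1:R) V (- D t)) ->
  (forall t, t0 < t -> 0 <= D t) ->
  forall s t, t0 < s -> s <= t -> V t <= V s.
Proof.
move=> hV hD s t s0 st.
have [c /andP[sc ct] e] := MVT_closed st (fun x hx => hV x (lt_le_trans s0 (proj1 (andP hx)))).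
by rewrite -subr_le0 e mulNr oppr_le0 mulr_ge0 ?subr_ge0 // hD // (lt_le_trans s0 sc).
Qed.

Section Barbalat.
Variables (R : realType) (V D dD : R -> R) (t0 L : R).
Hypotheses (hV : forall t, t0 < t -> is_derive t (1:R) V (- D t))
  (hD : forall t, t0 < t -> is_derive t (1:R) D (dD t))
  (hdD : forall t, t0 < t -> `|dD t| <= L) (L0 : 0 <= L).

(* Since [D] is [L]-Lipschitz, [D >= eps] at [t] keeps [D >= eps / 2] during a
   time [eps / (2 (L + 1))], over which [V] therefore drops by a fixed amount. *)
Lemma lyapunov_drop eps t : 0 < eps -> t0 < t -> eps <= D t ->
  V (t + eps / (2 * (L + 1))) <= V t - eps / (2 * (L + 1)) * (eps / 2).
Proof.
move=> e0 t0t et; set d := eps / (2 * (L + 1)).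
have L1 : 0 < L + 1 by rewrite ltr_pwDr.
have d0 : 0 < d by rewrite divr_gt0 // mulr_gt0.
have Ld : L * d <= eps / 2.
  have -> : L * d = eps / 2 * (L / (L + 1)) by rewrite /d; field; rewrite gt_eqF.
  apply: ler_piMr; first by rewrite divr_ge0 // ltW.
  by rewrite ler_pdivrMr // mul1r lerDl.
have derV x : t <= x <= t + d -> is_derive x (1:R) V (- D x).
  by move=> /andP[tx _]; apply: hV; apply: lt_le_trans tx.
have [c /andP[tc ctd] eV] := MVT_closed (ler_wpDr (ltW d0) (lexx t)) derV.
have Dc : eps / 2 <= D c.
  have derD x : t <= x <= c -> is_derive x (1:R) D (dD x).
    by move=> /andP[tx _]; apply: hD; apply: lt_le_trans tx.
  have [c' /andP[tc' c'c] eD] := MVT_closed tc derD.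
  have : `|dD c' * (c - t)| <= L * d.
    rewrite normrM [`|c - t|]ger0_norm ?subr_ge0 //.
    apply: ler_pM; rewrite ?subr_ge0 //; first exact: hdD (lt_le_trans t0t tc').
    by rewrite lerBlDl.
  rewrite ler_norml => /andP[hlo _].
  have -> : D c = D t + dD c' * (c - t) by rewrite -eD addrC subrK.
  lra.
have -> : V (t + d) = V t - D c * d by rewrite -[V (t + d)](subrK (V t)) eV [t + d]addrC addrK mulNr addrC.
by rewrite lerD2l lerN2 mulrC ler_pM2r.
Qed.

Hypotheses (hD0 : forall t, t0 < t -> 0 <= D t) (hV0 : forall t, t0 < t -> 0 <= V t).

Lemma barbalat : D t @[t --> +oo] --> 0.
Proof.
apply/cvgr0Pnorm_lt => eps e0; apply: contrapT => Hnear.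
have often M : exists2 t, M < t & eps <= D t.
  apply: contrapT => Hno; apply: Hnear; exists (Num.max M t0); split; first exact: num_real.
  move=> t; rewrite gt_max => /andP[Mt t0t]; rewrite ger0_norm ?hD0 // ltNge.
  by apply/negP => et; apply: Hno; exists t.
set d := eps / (2 * (L + 1)); set c := d * (eps / 2).
have d0 : 0 < d by rewrite divr_gt0 // mulr_gt0 // ltr_pwDr.
have c0 : 0 < c by rewrite mulr_gt0 // divr_gt0.
set s1 := t0 + 1; have s10 : t0 < s1 by rewrite ltrDl.
have descent k : exists2 s, t0 < s & V s <= V s1 - k%:R * c.
  elim: k => [|k [s s0 hs]]; first by exists s1; rewrite // mul0r subr0.
  have [t st et] := often s; have t0t := lt_trans s0 st.
  exists (t + d); first by rewrite (lt_le_trans t0t) // lerDl ltW.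
  apply: le_trans (lyapunov_drop e0 t0t et) _; rewrite -/d -/c.
  have := is_deriveN_nincr hV hD0 s0 (ltW st); rewrite -nat1r mulrDl mul1r; lra.
have [s s0] := descent (Num.bound (V s1 / c)).
have := archi_boundP (divr_ge0 (hV0 s10) (ltW c0)).
rewrite ltr_pdivrMr // => hb hs; have := hV0 s0; lra.
Qed.

End Barbalat.

Lemma ler_big_term (R : numDomainType) (I : finType) (P : pred I) (f : I -> R) i :
  P i -> (forall j, P j -> 0 <= f j) -> f i <= \sum_(j | P j) f j.
Proof.
move=> Pi h; rewrite (bigD1 i) //= lerDl sumr_ge0 // => j /andP[Pj _].
exact: h.
Qed.

Lemma cvg_comp_addr (R : realType) (T : topologicalType) (f : R -> T) (c : R) (l : T) :
  f x @[x --> +oo] --> l -> f (x + c) @[x --> +oo] --> l.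
Proof. by move=> hf; apply: cvg_comp (cvg_addrr c) hf. Qed.

Lemma connect_prop_closed (T : finType) (e : rel T) (P : T -> Prop) :
  (forall u v, P u -> e u v -> P v) -> forall u v, connect e u v -> P u -> P v.
Proof.
move=> h u v /connectP [p pt ->]; elim: p u pt => //= w p ih u /andP[euw pt] Pu.
exact: ih pt (h _ _ Pu euw).
Qed.

Section BoundedAfter.
Variables (R : realType) (a : R).

Definition bounded_after (V : normedModType R) (f : R -> V) :=
  exists M, forall t, a < t -> `|f t| <= M.

Lemma bounded_after_cst (V : normedModType R) (c : V) : bounded_after (fun _ => c).
Proof. by exists `|c|. Qed.

Lemma bounded_afterD (V : normedModType R) (f g : R -> V) :
  bounded_after f -> bounded_after g -> bounded_after (fun t => f t + g t).
Proof.
move=> [M1 h1] [M2 h2]; exists (M1 + M2) => t at_.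
by rewrite (le_trans (ler_normD _ _)) // lerD ?h1 ?h2.
Qed.

Lemma bounded_afterB (V : normedModType R) (f g : R -> V) :
  bounded_after f -> bounded_after g -> bounded_after (fun t => f t - g t).
Proof.
move=> hf [M hg]; apply: bounded_afterD => //.
by exists M => t at_; rewrite normrN hg.
Qed.

Lemma bounded_after_sum (V : normedModType R) (I : Type) (r : seq I) (P : pred I)
    (f : I -> R -> V) :
  (forall i, P i -> bounded_after (f i)) ->
  bounded_after (fun t => \sum_(i <- r | P i) f i t).
Proof.
move=> h; elim: r => [|i r ih].
  by under eq_fun do rewrite big_nil; exact: bounded_after_cst.
under eq_fun do rewrite big_cons; case: (boolP (P i)) => Pi //.
exact: bounded_afterD (h i Pi) ih.
Qed.

Lemma bounded_afterMl (k : R) (f : R -> R) :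
  bounded_after f -> bounded_after (fun t => k * f t).
Proof. by move=> [M hM]; exists (`|k| * M) => t at_; rewrite normrM ler_pM ?hM. Qed.

Lemma bounded_after_mulmx m (K : 'M[R]_m) (f : R -> 'cV[R]_m) :
  bounded_after f -> bounded_after (fun t => K *m f t).
Proof.
move=> [M h]; exists (m%:R * `|K| * M) => t at_.
by rewrite (le_trans (norm_mulmx_le _ _)) // ler_pM ?mulr_ge0 ?h.
Qed.

Lemma bounded_after_mxform m (K : 'M[R]_m) (u v : R -> 'cV[R]_m) :
  bounded_after u -> bounded_after v -> bounded_after (fun t => mxform K (u t) (v t)).
Proof.
move=> [M1 h1] [M2 h2]; exists ((m * m)%:R * `|K| * M1 * M2) => t at_.
rewrite (le_trans (norm_mxform_le _ _ _)) // ler_pM ?mulr_ge0 ?h2 //.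
by rewrite ler_pM ?mulr_ge0 ?h1.
Qed.

End BoundedAfter.

Lemma bounded_after_le (R : realType) (V : normedModType R) (a b : R) (f : R -> V) :
  a <= b -> bounded_after a f -> bounded_after b f.
Proof. by move=> ab [M h]; exists M => t bt; apply: h (le_lt_trans ab bt). Qed.

Lemma bounded_after_delay (R : realType) (V : normedModType R) (a c : R) (f : R -> V) :
  bounded_after a f -> bounded_after (a + c) (fun t => f (t - c)).
Proof. by move=> [M h]; exists M => t act; apply: h; rewrite ltrBrDr. Qed.

Lemma mxform_gap_identity (R : realType) m (K : 'M[R]_m) (u w z : 'cV[R]_m) : K^T = K ->
  mxform K u (w - u) + 2^-1 * (mxform K z z - mxform K w w) =
  2^-1 * (mxform K z z - mxform K u u) - 2^-1 * mxform K (u - w) (u - w).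
Proof. by move=> hK; rewrite !mxformBr !mxformBl (mxformC u w hK); lra. Qed.

Section Consensus.
Variables (R : realType) (m n : nat) (N : 'I_n -> {set 'I_n})
  (K : 'I_n -> 'I_n -> 'M[R]_m) (T : 'I_n -> 'I_n -> R)
  (gamma : 'I_n -> bool) (K0 : 'I_n -> 'M[R]_m)
  (x0 : 'cV[R]_m) (x : 'I_n -> R -> 'cV[R]_m).
Hypotheses (hK : forall i j, j \in N i -> spd (K j i))
  (hT : forall i j, j \in N i -> 0 <= T j i)
  (hK0 : forall i, gamma i -> spd (K0 i))
  (hlinks : links_ok N K)
  (hcont : forall i, continuous (x i))
  (hdyn : forall i (t : R), 0 < t ->
     is_derive t 1 (x i)
       (\sum_(j in N i) K j i *m (x j (t - T j i) - x i t)
        + (if gamma i then K0 i *m (x0 - x i t) else 0))).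

Definition err i (t : R) : 'cV[R]_m := x i t - x0.

Definition err' i (t : R) : 'cV[R]_m :=
  \sum_(j in N i) K j i *m (err j (t - T j i) - err i t)
  - (if gamma i then K0 i *m err i t else 0).

Definition gap j i (t : R) : 'cV[R]_m := err i t - err j (t - T j i).

Definition gap' j i (t : R) : 'cV[R]_m := err' i t - err' j (t - T j i).

Definition energy j i (s : R) : R := mxform (K j i) (err j s) (err j s).

(* The base point of the primitive only has to lie below every [t - T j i]
   with [t > 0]. *)
Definition energy_prim j i (t : R) : R :=
  parameterized_integral lebesgue_measure (- T j i - 1) t (energy j i).

Definition lyap (t : R) : R :=
  \sum_i 2^-1 * mxform 1%:M (err i t) (err i t) +
  \sum_i \sum_(j in N i) 2^-1 * (energy_prim j i t - energy_prim j i (t - T j i)).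

Definition diss (t : R) : R :=
  \sum_i \sum_(j in N i) 2^-1 * mxform (K j i) (gap j i t) (gap j i t) +
  \sum_i (if gamma i then mxform (K0 i) (err i t) (err i t) else 0).

Definition diss' (t : R) : R :=
  \sum_i \sum_(j in N i) 2^-1 *
    (mxform (K j i) (gap' j i t) (gap j i t) + mxform (K j i) (gap j i t) (gap' j i t)) +
  \sum_i (if gamma i then
    mxform (K0 i) (err' i t) (err i t) + mxform (K0 i) (err i t) (err' i t) else 0).

Lemma is_derive_err i (t : R) : 0 < t -> is_derive t (1:R) (err i) (err' i t).
Proof.
move=> t0; have := is_deriveB (hdyn i t0) (is_derive_cst x0 t 1); rewrite subr0.
move=> hd; apply: (is_derive_eq hd); rewrite /err'; congr (_ + _).
  by apply: eq_bigr => j _; rewrite /err opprB addrA subrK.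
by case: (gamma i); rewrite ?oppr0 // /err -mulmxN opprB.
Qed.

Lemma continuous_energy j i : continuous (energy j i).
Proof.
have herr a : continuous (fun s => err j s a ord0).
  by apply: continuous_coord => s; apply: continuousB; [exact: hcont | exact: cst_continuous].
exact: continuous_mxform.
Qed.

Lemma energy_ge0 j i (s : R) : j \in N i -> 0 <= energy j i s.
Proof. by move=> /hK; exact: spd_mxform_ge0. Qed.

Lemma diss_ge0 (t : R) : 0 <= diss t.
Proof.
rewrite addr_ge0 //; apply: sumr_ge0 => i _.
  by apply: sumr_ge0 => j /hK hKji; rewrite mulr_ge0 // spd_mxform_ge0.
by case: (boolP (gamma i)) => // /hK0; exact: spd_mxform_ge0.
Qed.

Lemma energy_delay_ge0 j i (t : R) : j \in N i -> 0 < t ->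
  0 <= energy_prim j i t - energy_prim j i (t - T j i).
Proof.
move=> jN t0; have Tji := hT jN.
have der s : t - T j i <= s <= t -> is_derive s (1:R) (energy_prim j i) (energy j i s).
  by move=> /andP[s1 _]; apply: is_derive_integral; [exact: continuous_energy | lra].
have tT : t - T j i <= t by rewrite lerBlDr lerDl.
have [c _ ->] := MVT_closed tT der.
by rewrite mulr_ge0 ?energy_ge0 // subKr.
Qed.

Lemma lyap_ge0 (t : R) : 0 < t -> 0 <= lyap t.
Proof.
move=> t0; rewrite addr_ge0 //; apply: sumr_ge0 => i _.
  by rewrite mulr_ge0 // mxform1_ge0.
by apply: sumr_ge0 => j jN; rewrite mulr_ge0 // energy_delay_ge0.
Qed.

(* Completing the square in each link turns the derivative of the
   Lyapunov-Krasovskii functional into [- diss] plus a telescoping sum of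
   gains, which vanishes by the balance of the links. *)
Lemma lyap_node_derivative i (t : R) :
  mxform 1%:M (err i t) (err' i t) +
  \sum_(j in N i) 2^-1 * (energy j i t - energy j i (t - T j i)) =
  \sum_(j in N i) 2^-1 * (mxform (K j i) (err j t) (err j t) - mxform (K j i) (err i t) (err i t)) -
  (\sum_(j in N i) 2^-1 * mxform (K j i) (gap j i t) (gap j i t) +
   (if gamma i then mxform (K0 i) (err i t) (err i t) else 0)).
Proof.
rewrite /err' mxformBr mxform_sumr.
have -> : mxform 1%:M (err i t) (if gamma i then K0 i *m err i t else 0) =
    (if gamma i then mxform (K0 i) (err i t) (err i t) else 0).
  by case: (gamma i); rewrite ?mxform1_mulmx // /mxform !mulmx0 mxE.
suff : \sum_(j in N i) mxform 1%:M (err i t) (K j i *m (err j (t - T j i) - err i t)) +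
  \sum_(j in N i) 2^-1 * (energy j i t - energy j i (t - T j i)) =
  \sum_(j in N i) 2^-1 * (mxform (K j i) (err j t) (err j t) - mxform (K j i) (err i t) (err i t)) -
  \sum_(j in N i) 2^-1 * mxform (K j i) (gap j i t) (gap j i t) by lra.
rewrite -big_split -sumrB /=; apply: eq_bigr => j /hK [hKs _].
by rewrite mxform1_mulmx mxform_gap_identity.
Qed.

Lemma balanced_energy_sum (t : R) : \sum_i \sum_(j in N i)
  2^-1 * (mxform (K j i) (err j t) (err j t) - mxform (K j i) (err i t) (err i t)) = 0.
Proof.
under eq_bigr do rewrite -mulr_sumr sumrB.
rewrite -mulr_sumr sumrB (exchange_big_dep predT) //=.
suff -> : \sum_j \sum_(i | j \in N i) mxform (K j i) (err j t) (err j t) =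
  \sum_i \sum_(j in N i) mxform (K j i) (err i t) (err i t) by rewrite subrr mulr0.
by apply: eq_bigr => j _; rewrite -!mxform_sumK links_ok_balanced.
Qed.

Lemma is_derive_lyap (t : R) : 0 < t -> is_derive t (1:R) lyap (- diss t).
Proof.
move=> t0.
have hA : is_derive t (1:R) (fun s => \sum_i 2^-1 * mxform 1%:M (err i s) (err i s))
    (\sum_i 2^-1 * (mxform 1%:M (err' i t) (err i t) + mxform 1%:M (err i t) (err' i t))).
  apply: is_derive_big => i _; apply: is_deriveZ.
  by apply: is_derive_mxform; apply: is_derive_err.
have hB : is_derive t (1:R)
    (fun s => \sum_i \sum_(j in N i) 2^-1 * (energy_prim j i s - energy_prim j i (s - T j i)))
    (\sum_i \sum_(j in N i) 2^-1 * (energy j i t - energy j i (t - T j i))).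
  apply: is_derive_big => i _; apply: is_derive_big => j jN; apply: is_deriveZ.
  have Tji := hT jN; apply: is_deriveB.
    by apply: is_derive_integral; [exact: continuous_energy | lra].
  by apply: is_derive_delay; apply: is_derive_integral; [exact: continuous_energy | lra].
apply: (is_derive_eq (is_deriveD hA hB)).
have half_double (y : R) : 2^-1 * (y + y) = y by lra.
rewrite -big_split /=.
under eq_bigr do rewrite (mxformC _ _ (trmx1 _ _)) half_double lyap_node_derivative.
by rewrite sumrB big_split /= balanced_energy_sum add0r.
Qed.

Lemma lyap_nonincr (s t : R) : 0 < s -> s <= t -> lyap t <= lyap s.
Proof.
by apply: (is_deriveN_nincr (D := diss)) => [u|u _]; [exact: is_derive_lyap | exact: diss_ge0].
Qed.

Lemma sqr_norm_err_le_lyap i (t : R) : 0 < t -> `|err i t| ^+ 2 <= 2 * lyap t.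
Proof.
move=> t0; apply: le_trans (sqr_norm_le_mxform1 _) _.
have hfst : 2^-1 * mxform 1%:M (err i t) (err i t) <=
    \sum_k 2^-1 * mxform 1%:M (err k t) (err k t).
  by apply: ler_big_term => // k _; rewrite mulr_ge0 // mxform1_ge0.
have hsnd : 0 <= \sum_k \sum_(j in N k) 2^-1 * (energy_prim j k t - energy_prim j k (t - T j k)).
  by apply: sumr_ge0 => k _; apply: sumr_ge0 => j jN; rewrite mulr_ge0 // energy_delay_ge0.
rewrite /lyap; lra.
Qed.

Lemma bounded_err i : bounded_after 1 (err i).
Proof.
exists (Num.sqrt (2 * lyap 1)) => t t1; have t0 := lt_trans ltr01 t1.
rewrite -[`|err i t|]normr_id -sqrtr_sqr ler_sqrt ?mulr_ge0 ?lyap_ge0 //.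
by rewrite (le_trans (sqr_norm_err_le_lyap _ t0)) // ler_pM2l // lyap_nonincr // ltW.
Qed.

Definition delay_bound : R := \sum_i \sum_(j in N i) T j i.

Lemma delay_bound_ge0 : 0 <= delay_bound.
Proof. by apply: sumr_ge0 => i _; apply: sumr_ge0 => j; apply: hT. Qed.

Lemma le_delay_bound i j : j \in N i -> T j i <= delay_bound.
Proof.
have nneg k : 0 <= \sum_(l in N k) T l k by apply: sumr_ge0 => l; apply: hT.
move=> jN; apply: le_trans (ler_big_term (P := predT) _ (fun k _ => nneg k)) => //.
by apply: ler_big_term => // l; apply: hT.
Qed.

Lemma bounded_err_delay j i : j \in N i ->
  bounded_after (1 + delay_bound) (fun t => err j (t - T j i)).
Proof.
move=> jN; apply: bounded_after_le (bounded_after_delay _ (bounded_err j)).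
by rewrite lerD2l le_delay_bound.
Qed.

Lemma bounded_err' i : bounded_after (1 + delay_bound) (err' i).
Proof.
have herr k : bounded_after (1 + delay_bound) (err k).
  by apply: bounded_after_le (bounded_err k); rewrite lerDl delay_bound_ge0.
apply: bounded_afterB.
  apply: bounded_after_sum => j jN; apply: bounded_after_mulmx.
  exact: bounded_afterB (bounded_err_delay jN) (herr i).
by case: (gamma i); [exact: bounded_after_mulmx | exact: bounded_after_cst].
Qed.

Lemma bounded_err_late i : bounded_after (1 + 2 * delay_bound) (err i).
Proof.
apply: bounded_after_le (bounded_err i).
by rewrite lerDl mulr_ge0 ?delay_bound_ge0.
Qed.

Lemma bounded_gap j i : j \in N i -> bounded_after (1 + 2 * delay_bound) (gap j i).
Proof.
move=> jN; have db := delay_bound_ge0.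
apply: bounded_afterB; first exact: bounded_err_late.
by apply: bounded_after_le (bounded_err_delay jN); lra.
Qed.

Lemma bounded_err'_late i : bounded_after (1 + 2 * delay_bound) (err' i).
Proof. by apply: bounded_after_le (bounded_err' i); have := delay_bound_ge0; lra. Qed.

Lemma bounded_gap' j i : j \in N i -> bounded_after (1 + 2 * delay_bound) (gap' j i).
Proof.
move=> jN; have db := delay_bound_ge0; have Tji := le_delay_bound jN.
apply: bounded_afterB; first exact: bounded_err'_late.
by apply: bounded_after_le (bounded_after_delay _ (bounded_err' j)); lra.
Qed.

Lemma bounded_diss' : bounded_after (1 + 2 * delay_bound) diss'.
Proof.
apply: bounded_afterD.
  apply: bounded_after_sum => i _; apply: bounded_after_sum => j jN.
  have [hg hg'] := (bounded_gap jN, bounded_gap' jN).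
  by apply: bounded_afterMl; apply: bounded_afterD; apply: bounded_after_mxform.
apply: bounded_after_sum => i _; case: (gamma i); last exact: bounded_after_cst.
have [he he'] := (bounded_err_late i, bounded_err'_late i).
by apply: bounded_afterD; apply: bounded_after_mxform.
Qed.

Lemma is_derive_gap j i (t : R) : j \in N i -> delay_bound < t ->
  is_derive t (1:R) (gap j i) (gap' j i t).
Proof.
move=> jN tT; have Tji := le_delay_bound jN; have Tji0 := hT jN.
apply: is_deriveB; first by apply: is_derive_err; lra.
by apply: is_derive_delay; apply: is_derive_err; lra.
Qed.

Lemma is_derive_diss (t : R) : delay_bound < t -> is_derive t (1:R) diss (diss' t).
Proof.
move=> tT; have t0 : 0 < t by apply: le_lt_trans delay_bound_ge0 tT.
apply: is_deriveD.
  apply: is_derive_big => i _; apply: is_derive_big => j jN; apply: is_deriveZ.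
  by apply: is_derive_mxform; apply: is_derive_gap.
apply: is_derive_big => i _; case: (gamma i); last exact: is_derive_cst.
by apply: is_derive_mxform; apply: is_derive_err.
Qed.

Lemma diss_cvg0 : diss t @[t --> +oo] --> 0.
Proof.
have [L hL] := bounded_diss'; have db := delay_bound_ge0.
apply: (@barbalat _ lyap _ diss' (1 + 2 * delay_bound) `|L|) => //.
- by move=> t tT; apply: is_derive_lyap; lra.
- by move=> t tT; apply: is_derive_diss; lra.
- by move=> t /hL hLt; apply: le_trans hLt (ler_norm L).
- by move=> t _; apply: diss_ge0.
- by move=> t tT; apply: lyap_ge0; lra.
Qed.

Lemma gap_energy_le_diss j i (t : R) : j \in N i ->
  2^-1 * mxform (K j i) (gap j i t) (gap j i t) <= diss t.
Proof.
move=> jN; have hgap k l : l \in N k -> 0 <= 2^-1 * mxform (K l k) (gap l k t) (gap l k t).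
  by move=> /hK hlk; rewrite mulr_ge0 ?spd_mxform_ge0.
have hlead k : 0 <= if gamma k then mxform (K0 k) (err k t) (err k t) else 0.
  by case: (boolP (gamma k)) => // /hK0; exact: spd_mxform_ge0.
apply: le_trans (ler_wpDr (sumr_ge0 _ (fun k _ => hlead k)) (lexx _)).
apply: le_trans (ler_big_term (P := predT) (i := i) _ _) => //.
  exact: ler_big_term jN (hgap i).
by move=> k _; apply: sumr_ge0 => l; apply: hgap.
Qed.

Lemma leader_energy_le_diss i (t : R) : gamma i ->
  mxform (K0 i) (err i t) (err i t) <= diss t.
Proof.
move=> gi; have hlead k : 0 <= if gamma k then mxform (K0 k) (err k t) (err k t) else 0.
  by case: (boolP (gamma k)) => // /hK0; exact: spd_mxform_ge0.
apply: le_trans (ler_wpDl _ (lexx _)).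
  by have := ler_big_term (P := predT) (i := i) isT (fun k _ => hlead k); rewrite gi.
by apply: sumr_ge0 => k _; apply: sumr_ge0 => l /hK hlk; rewrite mulr_ge0 ?spd_mxform_ge0.
Qed.

Lemma gap_cvg0 j i : j \in N i -> gap j i t @[t --> +oo] --> (0 : 'cV[R]_m).
Proof.
move=> jN; apply: spd_cvg0 (hK jN) _.
have diss2 : diss t + diss t @[t --> +oo] --> (0 : R).
  by rewrite -[0](addr0 0); exact: cvgD diss_cvg0 diss_cvg0.
apply: squeeze_cvgr (cvg_cst 0) diss2; apply: nearW => t; rewrite (spd_mxform_ge0 _ (hK jN)) /=.
by have := gap_energy_le_diss t jN; lra.
Qed.

Lemma err_cvg0_leader i : gamma i -> err i t @[t --> +oo] --> (0 : 'cV[R]_m).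
Proof.
move=> gi; apply: spd_cvg0 (hK0 gi) _.
apply: squeeze_cvgr (cvg_cst 0) diss_cvg0; apply: nearW => t.
by rewrite (spd_mxform_ge0 _ (hK0 gi)) leader_energy_le_diss.
Qed.

Lemma err_cvg0_adj a b : net_adj N gamma (Some a) (Some b) ->
  err a t @[t --> +oo] --> (0 : 'cV[R]_m) -> err b t @[t --> +oo] --> (0 : 'cV[R]_m).
Proof.
move=> /orP[abN|baN] ha.
  have -> : err b = fun t => gap a b t + err a (t - T a b).
    by apply/funext => t; rewrite /gap subrK.
  by rewrite -[0](addr0 0); apply: cvgD (gap_cvg0 abN) (cvg_comp_addr _ ha).
have hd : err b (t - T b a) @[t --> +oo] --> (0 : 'cV[R]_m).
  have -> : (fun t => err b (t - T b a)) = fun t => err a t - gap b a t.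
    by apply/funext => t; rewrite /gap opprB [err a t + _]addrC subrK.
  by rewrite -[0](subr0 0); apply: cvgB ha (gap_cvg0 baN).
have -> : err b = fun t => err b (t + T b a - T b a) by apply/funext => t; rewrite addrK.
exact: (cvg_comp_addr (f := fun s => err b (s - T b a)) (T b a) hd).
Qed.

Hypothesis hconn : net_connected N gamma.

Lemma err_cvg0 i : err i t @[t --> +oo] --> (0 : 'cV[R]_m).
Proof.
pose P u := if u is Some j then err j t @[t --> +oo] --> (0 : 'cV[R]_m) else True.
apply: (connect_prop_closed (P := P) _ (hconn None (Some i))) => // [[a|] [b|]] //=.
  by move=> ha /err_cvg0_adj; apply.
by move=> _ /err_cvg0_leader.
Qed.

Lemma state_cvg i : x i t @[t --> +oo] --> x0.
Proof.
have -> : x i = fun t => err i t + x0 by apply/funext => t; rewrite subrK.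
by rewrite -[X in _ --> X]add0r; apply: cvgD (err_cvg0 i) (cvg_cst x0).
Qed.

End Consensus.

Theorem theorem4 (R : realType) (m n : nat)
  (N : 'I_n -> {set 'I_n})
  (K : 'I_n -> 'I_n -> 'M[R]_m) (T : 'I_n -> 'I_n -> R)
  (gamma : 'I_n -> bool) (K0 : 'I_n -> 'M[R]_m)
  (x0 : 'cV[R]_m) (x : 'I_n -> R -> 'cV[R]_m)
  (hN : forall i, i \notin N i)
  (hK : forall i j, j \in N i -> spd (K j i))
  (hT : forall i j, j \in N i -> 0 <= T j i)
  (hK0 : forall i, gamma i -> spd (K0 i))
  (hgam : exists i, gamma i)
  (hconn : net_connected N gamma)
  (hlinks : links_ok N K)
  (hcont : forall i, continuous (x i))
  (hdyn : forall i (t : R), 0 < t ->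
     is_derive t 1 (x i)
       (\sum_(j in N i) K j i *m (x j (t - T j i) - x i t)
        + (if gamma i then K0 i *m (x0 - x i t) else 0))) :
  forall i, x i t @[t --> +oo] --> x0.
Proof.
exact: state_cvg hK hT hK0 hlinks hcont hdyn hconn.
Qed.
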